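(* Let $n\geq 1$ and let $A\in \mathcal{M}_{n}(\mathbb{Z})$ with $\det(A)\neq 0$. Let $\Lambda=\{Az : z\in\mathbb{Z}^n\}$ be the lattice generated by the columns of $A$, let $\mathcal{P}_A=\{Ay : y\in[0,1)^n\}$ be its fundamental parallelepiped, and let $\mathcal{F}_A$ be the set of $A$-feasible lattice vectors. If $\lambda = Az\in\mathcal{F}_A$ with $z\in\mathbb{Z}^n$, then $$\|z\|\leq \left(\frac{\kappa(A)}{2}+1\right)\sqrt{n}.$$
   Context: $\|\cdot\|$ denotes the Euclidean norm on $\mathbb{R}^n$, and $d(x,y)=\|x-y\|$. For a subset $\Lambda\subseteq\mathbb{R}^n$, $d(x,\Lambda)=\min_{\lambda\in\Lambda}d(x,\lambda)$. For a matrix $M$, $\|M\|=\max_{\|y\|=1}\|My\|$ is the spectral norm, and for invertible $M$ the condition number is $\kappa(M)=\|M\|\cdot\|M^{-1}\|$. A lattice vector $\lambda\in\Lambda$ is called $A$-feasible if there exists $x\in\mathcal{P}_A$ with $d(\lambda,x)=d(x,\Lambda)$; $\mathcal{F}_A$ denotes the set of $A$-feasible lattice vectors. *)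

From HB Require Import structures.
From mathcomp Require Import all_boot all_order all_algebra.
From mathcomp Require Import all_classical all_reals.
Set Implicit Arguments. Unset Strict Implicit. Unset Printing Implicit Defensive.
Import Order.TTheory GRing.Theory Num.Theory.
Local Open Scope ring_scope.
Local Open Scope classical_set_scope.

Section Defs.
Variable R : realType.

Definition enorm n (v : 'cV[R]_n) : R := Num.sqrt (\sum_(i < n) v i 0 ^+ 2).

Definition edist n (x y : 'cV[R]_n) : R := enorm (x - y).

Definition specnorm n (M : 'M[R]_n) : R :=
  sup [set enorm (M *m y) | y in [set y : 'cV[R]_n | enorm y = 1]].

Definition cond_number n (M : 'M[R]_n) : R := specnorm M * specnorm (invmx M).

Definition intmx m p (A : 'M[int]_(m, p)) : 'M[R]_(m, p) := map_mx intr A.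

Definition lattice n (A : 'M[int]_n) : set 'cV[R]_n :=
  [set intmx A *m intmx z | z in [set: 'cV[int]_n]].

Definition fund_par n (A : 'M[int]_n) : set 'cV[R]_n :=
  [set intmx A *m y | y in [set y : 'cV[R]_n | forall i, 0 <= y i 0 < 1]].

Definition dist_set n (x : 'cV[R]_n) (L : set 'cV[R]_n) : R :=
  inf [set edist x l | l in L].

Definition feasible n (A : 'M[int]_n) : set 'cV[R]_n :=
  [set l | lattice A l /\
           exists2 x, fund_par A x & edist l x = dist_set x (lattice A)].

End Defs.

From HB Require Import structures.
From mathcomp Require Import all_boot all_order all_algebra.
From mathcomp Require Import all_classical all_reals.
From mathcomp Require Import ring lra.
Set Implicit Arguments. Unset Strict Implicit. Unset Printing Implicit Defensive.
Import Order.TTheory GRing.Theory Num.Theory.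
Local Open Scope ring_scope.
Local Open Scope classical_set_scope.

(* Let x = A y, y in [0,1)^n, witness the feasibility of A z.  Rounding y
   coordinatewise gives a lattice point A w with ||x - A w|| <= ||A|| sqrt(n)/2,
   so ||A z - x|| = d(x, Lambda) obeys the same bound.  Hence
   ||z - y|| <= ||A^-1|| ||A (z - y)|| <= kappa(A) sqrt(n)/2, while ||y|| <= sqrt(n). *)

Lemma CauchySchwarz_sum (R : realDomainType) n (a b : 'I_n -> R) :
  (\sum_i a i * b i) ^+ 2 <= (\sum_i a i ^+ 2) * (\sum_i b i ^+ 2).
Proof.
set A := \sum_i a i ^+ 2; set B := \sum_i b i ^+ 2; set C := \sum_i a i * b i.
have B_ge0 : 0 <= B by apply: sumr_ge0 => i _; exact: sqr_ge0.
have [B0 | B_neq0] := eqVneq B 0.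
  have b0 i : b i = 0.
    apply/eqP; rewrite -sqrf_eq0; apply/eqP.
    exact: (psumr_eq0P (fun i _ => sqr_ge0 (b i)) B0).
  have -> : C = 0 by rewrite /C big1 // => i _; rewrite b0 mulr0.
  by rewrite B0 expr0n /= mulr0.
have B_gt0 : 0 < B by rewrite lt_def B_neq0 B_ge0.
have dev_ge0 : 0 <= \sum_i (B * a i - C * b i) ^+ 2.
  by apply: sumr_ge0 => i _; exact: sqr_ge0.
have dev_eq : \sum_i (B * a i - C * b i) ^+ 2 = B * (A * B - C ^+ 2).
  transitivity (\sum_i (B ^+ 2 * a i ^+ 2 - 2 * B * C * (a i * b i) + C ^+ 2 * b i ^+ 2)).
    by apply: eq_bigr => i _; ring.
  by rewrite !big_split /= sumrN -!mulr_sumr -/A -/B -/C; ring.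
by move: dev_ge0; rewrite dev_eq pmulr_rge0 // subr_ge0 mulrC.
Qed.

Section EuclideanNorm.
Variable R : realType.

Lemma sumsq_ge0 n (v : 'cV[R]_n) : 0 <= \sum_i v i 0 ^+ 2.
Proof. by apply: sumr_ge0 => i _; exact: sqr_ge0. Qed.

Lemma enorm_ge0 n (v : 'cV[R]_n) : 0 <= enorm v.
Proof. exact: sqrtr_ge0. Qed.

Lemma ler_enormD n (u v : 'cV[R]_n) : enorm (u + v) <= enorm u + enorm v.
Proof.
rewrite /enorm; set a := \sum_i u i 0 ^+ 2; set b := \sum_i v i 0 ^+ 2.
have a_ge0 : 0 <= a := sumsq_ge0 u.
have b_ge0 : 0 <= b := sumsq_ge0 v.
rewrite -[X in _ <= X]ger0_norm ?addr_ge0 ?sqrtr_ge0 // -sqrtr_sqr.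
rewrite ler_sqrt ?sqr_ge0 //.
have -> : \sum_i (u + v) i 0 ^+ 2 = a + 2 * (\sum_i u i 0 * v i 0) + b.
  transitivity (\sum_i (u i 0 ^+ 2 + 2 * (u i 0 * v i 0) + v i 0 ^+ 2)).
    by apply: eq_bigr => i _; rewrite mxE; ring.
  by rewrite !big_split /= -mulr_sumr.
have -> : (Num.sqrt a + Num.sqrt b) ^+ 2 = a + 2 * (Num.sqrt a * Num.sqrt b) + b.
  by rewrite sqrrD !sqr_sqrtr //; ring.
rewrite lerD2r lerD2l ler_pM2l // -sqrtrM //.
apply: le_trans (real_ler_norm (num_real _)) _.
by rewrite -sqrtr_sqr ler_sqrt ?mulr_ge0 //; exact: CauchySchwarz_sum.
Qed.

Lemma enormZ n c (v : 'cV[R]_n) : enorm (c *: v) = `|c| * enorm v.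
Proof.
rewrite /enorm -sqrtr_sqr -sqrtrM ?sqr_ge0 // mulr_sumr; congr Num.sqrt.
by apply: eq_bigr => i _; rewrite mxE exprMn.
Qed.

Lemma enorm_le_sqrt_dim n (v : 'cV[R]_n) c :
  0 <= c -> (forall i, `|v i 0| <= c) -> enorm v <= c * Num.sqrt n%:R.
Proof.
move=> c_ge0 v_le_c; rewrite /enorm -(ger0_norm c_ge0) -sqrtr_sqr.
rewrite -sqrtrM ?sqr_ge0 // ler_sqrt ?mulr_ge0 ?sqr_ge0 //.
have -> : c ^+ 2 * n%:R = \sum_(i < n) c ^+ 2.
  by rewrite sumr_const card_ord mulr_natr.
apply: ler_sum => i _.
by rewrite -real_normK ?num_real // lerXn2r ?nnegrE ?normr_ge0.
Qed.

Lemma enorm_mulmx_le_frobenius n (M : 'M[R]_n) (v : 'cV[R]_n) :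
  enorm (M *m v) <= Num.sqrt (\sum_i \sum_j M i j ^+ 2) * enorm v.
Proof.
have frob_ge0 : 0 <= \sum_i \sum_j M i j ^+ 2.
  by do 2!apply: sumr_ge0 => ? _; exact: sqr_ge0.
rewrite /enorm -sqrtrM // ler_sqrt ?mulr_ge0 ?sumsq_ge0 //.
rewrite mulr_suml; apply: ler_sum => i _; rewrite mxE.
exact: (CauchySchwarz_sum (fun j => M i j) (fun j => v j 0)).
Qed.

Lemma specnorm_ub n (M : 'M[R]_n) (u : 'cV[R]_n) :
  enorm u = 1 -> enorm (M *m u) <= specnorm M.
Proof.
move=> u1; apply: ub_le_sup; last by exists u.
exists (Num.sqrt (\sum_i \sum_j M i j ^+ 2)) => _ [w /= w1 <-].
by apply: le_trans (enorm_mulmx_le_frobenius M w) _; rewrite w1 mulr1.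
Qed.

Lemma specnorm_ge0 n (M : 'M[R]_n) : 0 <= specnorm M.
Proof.
rewrite /specnorm.
have [-> | /set0P [_ [u u1 _]]] :=
  eqVneq [set enorm (M *m y) | y in [set y : 'cV[R]_n | enorm y = 1]] set0.
  by rewrite sup0.
exact: le_trans (enorm_ge0 _) (specnorm_ub M u1).
Qed.

Lemma enorm_mulmx_le n (M : 'M[R]_n) (v : 'cV[R]_n) :
  enorm (M *m v) <= specnorm M * enorm v.
Proof.
have [v0 | v_neq0] := eqVneq (enorm v) 0.
  by have := enorm_mulmx_le_frobenius M v; rewrite v0 !mulr0.
have v_gt0 : 0 < enorm v by rewrite lt_def v_neq0 enorm_ge0.
have unit_v : enorm ((enorm v)^-1 *: v) = 1.
  by rewrite enormZ ger0_norm ?invr_ge0 ?enorm_ge0 // mulVf.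
have := specnorm_ub M unit_v.
by rewrite -scalemxAr enormZ ger0_norm ?invr_ge0 ?enorm_ge0 // mulrC ler_pdivrMr.
Qed.

Lemma enorm_le_invmx n (M : 'M[R]_n) (v : 'cV[R]_n) : M \in unitmx ->
  enorm v <= specnorm (invmx M) * enorm (M *m v).
Proof. by move=> M_unit; rewrite -{1}(mulKmx M_unit v) enorm_mulmx_le. Qed.

End EuclideanNorm.

Section Lattice.
Variables (R : realType) (n : nat) (A : 'M[int]_n).
Local Notation AR := (intmx R A).

Lemma intmx_unitmx : \det A != 0 -> AR \in unitmx.
Proof. by rewrite unitmxE unitfE det_map_mx intr_eq0. Qed.

Lemma dist_set_lattice_le (x l : 'cV[R]_n) :
  lattice A l -> dist_set x (lattice A) <= edist x l.
Proof.
move=> Ll; apply: ge_inf; last by exists l.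
by exists 0 => _ [l' _ <-]; exact: enorm_ge0.
Qed.

Lemma round_col (y : 'cV[R]_n) :
  exists w : 'cV[int]_n, forall i, `|(y - intmx R w) i 0| <= 1 / 2.
Proof.
exists (\col_i Num.floor (y i 0 + 1 / 2)) => i; rewrite !mxE ler_norml.
have := floor_le (y i 0 + 1 / 2); have := floorD1_gt (y i 0 + 1 / 2).
rewrite intrD; lra.
Qed.

Lemma dist_lattice_le (y : 'cV[R]_n) :
  dist_set (AR *m y) (lattice A) <= specnorm AR * (Num.sqrt n%:R / 2).
Proof.
have [w w_near] := round_col y.
apply: le_trans (dist_set_lattice_le _ (ex_intro2 _ _ w I erefl)) _.
rewrite /edist -mulmxBr; apply: le_trans (enorm_mulmx_le _ _) _.
rewrite ler_wpM2l ?specnorm_ge0 // mulrC -div1r.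
by apply: enorm_le_sqrt_dim w_near; rewrite divr_ge0.
Qed.

End Lattice.

Theorem lemma2p3 (R : realType) (n : nat) (A : 'M[int]_n) (z : 'cV[int]_n) :
  (0 < n)%N ->
  \det A != 0 ->
  feasible A (intmx R A *m intmx R z) ->
  enorm (intmx R z) <= (cond_number (intmx R A) / 2 + 1) * Num.sqrt (n%:R).
Proof.
move=> _ detA [_ [_ [y y01 <-] dist_eq]].
set AR := intmx R A; set zR := intmx R z; set s := Num.sqrt (n%:R : R).
have y_le : enorm y <= s.
  rewrite -[s]mul1r; apply: enorm_le_sqrt_dim => // i.
  by have /andP[y_ge0 /ltW y_le1] := y01 i; rewrite ger0_norm.
have Azy_le : enorm (AR *m (zR - y)) <= specnorm AR * (s / 2).
  by rewrite mulmxBr -/(edist _ _) dist_eq; exact: dist_lattice_le.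
have zy_le : enorm (zR - y) <= specnorm (invmx AR) * (specnorm AR * (s / 2)).
  apply: le_trans (enorm_le_invmx _ (intmx_unitmx R detA)) _.
  by rewrite ler_wpM2l ?specnorm_ge0.
rewrite -(subrK y zR); apply: le_trans (ler_enormD _ _) _.
have -> : (cond_number AR / 2 + 1) * s
          = specnorm (invmx AR) * (specnorm AR * (s / 2)) + s.
  by rewrite /cond_number; ring.
exact: lerD.
Qed.
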